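(* Let $\lambda\in(0,1)$ and let $p:[1,\infty)\to(0,\infty)$ be continuously differentiable with $p(t)$ non-increasing and tending to $0$, and $p(t)\ln t$ non-decreasing and tending to $+\infty$ as $t\to\infty$. Put $s_j=p(j)\ln j$. Then $$\sum_{j=1}^N\lambda^{s_j}\ \sim\ N^{1+p(N)\ln\lambda}\qquad\text{as }N\to\infty,$$ i.e. the ratio of the two sides tends to $1$. *)

From Stdlib Require Import Reals.
Open Scope R_scope.

Fixpoint sum_from_1 (f : nat -> R) (N : nat) : R :=
  match N with
  | O => 0
  | S n => sum_from_1 f n + f (S n)
  end.

Definition C1_on_from_1 (p : R -> R) : Prop :=
  exists p' : R -> R,
    (forall t, 1 <= t -> derivable_pt_lim p t (p' t)) /\
    (forall t, 1 <= t -> continuity_pt p' t).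

(* Put a := - p(N) ln lam > 0, so that the denominator is N^(1-a).  For 1 <= j <= N,
   N^(-a) = lam^(s_N) <= lam^(s_j) <= j^(-a): the first inequality because s_j <= s_N,
   the second because p(j) >= p(N).  Summing over j and comparing sum_(j<=N) j^(-a)
   with the integral of t^(-a) gives N^(1-a) <= sum_(j<=N) lam^(s_j) <= N^(1-a) / (1-a),
   and a -> 0 as N -> oo. *)

From Stdlib Require Import Reals Lra Lia.
Open Scope R_scope.

Lemma Rpower_le_bernoulli (y b : R) :
  0 < y -> 0 <= b <= 1 -> Rpower y b <= 1 + b * (y - 1).
Proof.
  intros Hy Hb. unfold Rpower.
  set (L := ln y).
  assert (HeL : exp L = y) by (apply exp_ln; exact Hy).
  assert (Hpos := exp_pos (b * L)).
  (* [exp (b L)] is the [b]-weighted mean of the left-hand sides of [H1] and [H0],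
     each bounded by [1 + u <= exp u]. *)
  assert (H1 : exp (b * L) * (1 + (1 - b) * L) <= exp L).
  { replace (exp L) with (exp (b * L) * exp ((1 - b) * L))
      by (rewrite <- exp_plus; f_equal; ring).
    apply Rmult_le_compat_l; [lra | apply exp_ineq1_le]. }
  assert (H0 : exp (b * L) * (1 + - (b * L)) <= 1).
  { replace 1 with (exp (b * L) * exp (- (b * L))) at 2
      by (rewrite <- exp_plus, Rplus_opp_r; apply exp_0).
    apply Rmult_le_compat_l; [lra | apply exp_ineq1_le]. }
  nra.
Qed.

Lemma Rpower_base_1 (q : R) : Rpower 1 q = 1.
Proof. unfold Rpower; rewrite ln_1, Rmult_0_r; apply exp_0. Qed.

Lemma Rpower_inv_base (b s : R) : 0 < b -> Rpower b s = Rpower (/ b) (- s).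
Proof. intros Hb; unfold Rpower; rewrite ln_Rinv by exact Hb; f_equal; ring. Qed.

Lemma Rpower_ln_swap (b x q : R) : Rpower b (q * ln x) = Rpower x (q * ln b).
Proof. unfold Rpower; f_equal; ring. Qed.

Lemma Rpower_succ_sub_ge (x q : R) : 0 < x -> -1 <= q <= 0 ->
  (1 + q) * Rpower (x + 1) q <= Rpower (x + 1) (1 + q) - Rpower x (1 + q).
Proof.
  intros Hx Hq.
  set (E := Rpower (x + 1) (1 + q)).
  set (y := x / (x + 1)).
  assert (HE : 0 < E) by apply exp_pos.
  assert (Hy : 0 < y) by (unfold y; apply Rdiv_lt_0_compat; lra).
  assert (Hq1 : Rpower (x + 1) q = E / (x + 1)).
  { replace q with ((1 + q) + - (1)) at 1 by ring.
    rewrite Rpower_plus, Rpower_Ropp, Rpower_1 by lra. reflexivity. }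
  assert (Hxy : Rpower x (1 + q) = E * Rpower y (1 + q)).
  { unfold E; rewrite Rpower_mult_distr by lra. f_equal. unfold y; field; lra. }
  assert (Hy1 : y - 1 = - / (x + 1)) by (unfold y; field; lra).
  assert (Hb := Rpower_le_bernoulli y (1 + q) Hy ltac:(lra)).
  rewrite Hy1 in Hb.
  rewrite Hq1, Hxy. unfold Rdiv.
  assert (0 < / (x + 1)) by (apply Rinv_0_lt_compat; lra).
  nra.
Qed.

Lemma sum_from_1_le (f g : nat -> R) (N : nat) :
  (forall j, (1 <= j <= N)%nat -> f j <= g j) -> sum_from_1 f N <= sum_from_1 g N.
Proof.
  induction N as [|N IH]; intros Hfg; simpl; [lra|].
  apply Rplus_le_compat.
  - apply IH; intros j Hj; apply Hfg; lia.
  - apply Hfg; lia.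
Qed.

Lemma sum_from_1_const (c : R) (N : nat) : sum_from_1 (fun _ => c) N = INR N * c.
Proof. induction N as [|N IH]; simpl sum_from_1; [simpl; ring | rewrite IH, S_INR; ring]. Qed.

Lemma sum_Rpower_le (q : R) (N : nat) : -1 <= q <= 0 -> (1 <= N)%nat ->
  (1 + q) * sum_from_1 (fun j => Rpower (INR j) q) N <= Rpower (INR N) (1 + q) + q.
Proof.
  intros Hq HN. induction HN as [|N HN IH].
  - simpl. rewrite !Rpower_base_1. lra.
  - cbn [sum_from_1]. rewrite S_INR.
    assert (HxN : 0 < INR N) by (apply lt_0_INR; lia).
    pose proof (Rpower_succ_sub_ge (INR N) q HxN Hq). lra.
Qed.

Lemma Un_cv_INR_of_lim0 (f : R -> R) :
  (forall eps, 0 < eps -> exists M, forall t, M <= t -> Rabs (f t) < eps) ->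
  Un_cv (fun n => f (INR n)) 0.
Proof.
  intros Hf eps Heps.
  destruct (Hf eps Heps) as [M HM].
  destruct (INR_unbounded M) as [N HN].
  exists N; intros n Hn. unfold R_dist. rewrite Rminus_0_r.
  apply HM. apply Rle_trans with (INR N); [lra | apply le_INR; lia].
Qed.

Lemma Un_cv_mult_const_0 (u : nat -> R) (c : R) :
  Un_cv u 0 -> Un_cv (fun n => u n * c) 0.
Proof.
  intros Hu eps Heps.
  assert (Hc : 0 < Rabs c + 1) by (pose proof (Rabs_pos c); lra).
  destruct (Hu (eps / (Rabs c + 1))) as [N HN].
  { apply Rdiv_lt_0_compat; lra. }
  exists N; intros n Hn. specialize (HN n Hn). unfold R_dist in *.
  rewrite Rminus_0_r in *. rewrite Rabs_mult.
  apply Rle_lt_trans with (Rabs (u n) * (Rabs c + 1)).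
  - apply Rmult_le_compat_l; [apply Rabs_pos | lra].
  - apply Rlt_le_trans with (eps / (Rabs c + 1) * (Rabs c + 1)).
    + apply Rmult_lt_compat_r; lra.
    + right; field; lra.
Qed.

Lemma Un_cv_one_of_sandwich (u e : nat -> R) (N0 : nat) :
  Un_cv e 0 ->
  (forall n, (N0 <= n)%nat -> -1 < e n -> 1 <= u n <= / (1 + e n)) ->
  Un_cv u 1.
Proof.
  intros He Hu eps Heps.
  destruct (He (Rmin (/ 2) (eps / 2))) as [N HN].
  { apply Rmin_pos; lra. }
  exists (N + N0)%nat; intros n Hn.
  specialize (HN n ltac:(lia)). unfold R_dist in *. rewrite Rminus_0_r in HN.
  pose proof (Rmin_l (/ 2) (eps / 2)). pose proof (Rmin_r (/ 2) (eps / 2)).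
  destruct (Rabs_def2 _ _ HN) as [Hlt Hgt].
  destruct (Hu n ltac:(lia) ltac:(lra)) as [Hlo Hhi].
  rewrite Rabs_pos_eq by lra.
  assert (Hinv : / (1 + e n) <= 1 + 2 * Rabs (e n)).
  { apply Rmult_le_reg_r with (1 + e n); [lra|].
    rewrite Rinv_l by lra.
    assert (- e n <= Rabs (e n)) by (rewrite <- Rabs_Ropp; apply Rle_abs).
    assert (0 <= Rabs (e n) * (1 + 2 * e n))
      by (apply Rmult_le_pos; [apply Rabs_pos | lra]).
    lra. }
  lra.
Qed.

Section Sandwich.

Variables (lam : R) (p : R -> R).
Hypothesis Hlam : 0 < lam < 1.
Hypothesis Hpos : forall t, 1 <= t -> 0 < p t.
Hypothesis Hdec : forall s t, 1 <= s -> s <= t -> p t <= p s.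
Hypothesis Hinc : forall s t, 1 <= s -> s <= t -> p s * ln s <= p t * ln t.

Let ln_lam_neg : ln lam < 0.
Proof. rewrite <- ln_1; apply ln_increasing; lra. Qed.

Let INR_range (n j : nat) : (1 <= j <= n)%nat -> 1 <= INR j <= INR n.
Proof. intros Hj; split; [apply (le_INR 1) | apply le_INR]; lia. Qed.

Lemma lam_power_ge_last (n j : nat) : (1 <= j <= n)%nat ->
  Rpower (INR n) (p (INR n) * ln lam) <= Rpower lam (p (INR j) * ln (INR j)).
Proof.
  intros Hj. destruct (INR_range n j Hj) as [Hj1 Hjn].
  rewrite <- Rpower_ln_swap, !(Rpower_inv_base lam) by lra.
  apply Rle_Rpower.
  - rewrite <- Rinv_1. apply Rinv_le_contravar; lra.
  - apply Ropp_le_contravar, Hinc; lra.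
Qed.

Lemma lam_power_le (n j : nat) : (1 <= j <= n)%nat ->
  Rpower lam (p (INR j) * ln (INR j)) <= Rpower (INR j) (p (INR n) * ln lam).
Proof.
  intros Hj. destruct (INR_range n j Hj) as [Hj1 Hjn].
  rewrite Rpower_ln_swap. apply Rle_Rpower; [lra|].
  rewrite !(Rmult_comm _ (ln lam)).
  apply Rmult_le_compat_neg_l; [lra | apply Hdec; lra].
Qed.

Lemma sum_lam_power_ge (n : nat) : (1 <= n)%nat ->
  Rpower (INR n) (1 + p (INR n) * ln lam)
    <= sum_from_1 (fun j => Rpower lam (p (INR j) * ln (INR j))) n.
Proof.
  intros Hn.
  rewrite Rpower_plus, Rpower_1 by (apply lt_0_INR; lia).
  rewrite <- sum_from_1_const.
  apply sum_from_1_le; intros j Hj; apply lam_power_ge_last; exact Hj.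
Qed.

Lemma sum_lam_power_le (n : nat) : (1 <= n)%nat -> -1 <= p (INR n) * ln lam ->
  (1 + p (INR n) * ln lam) * sum_from_1 (fun j => Rpower lam (p (INR j) * ln (INR j))) n
    <= Rpower (INR n) (1 + p (INR n) * ln lam).
Proof.
  intros Hn He.
  set (e := p (INR n) * ln lam) in *.
  assert (He0 : e <= 0).
  { assert (0 < p (INR n)) by (apply Hpos, (le_INR 1); exact Hn).
    pose proof ln_lam_neg. unfold e; nra. }
  apply Rle_trans with ((1 + e) * sum_from_1 (fun j => Rpower (INR j) e) n).
  - apply Rmult_le_compat_l; [lra|].
    apply sum_from_1_le; intros j Hj; apply lam_power_le; exact Hj.
  - pose proof (sum_Rpower_le e n (conj He He0) Hn). lra.
Qed.

Lemma ratio_sandwich (n : nat) : (1 <= n)%nat -> -1 < p (INR n) * ln lam ->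
  1 <= sum_from_1 (fun j => Rpower lam (p (INR j) * ln (INR j))) n
         / Rpower (INR n) (1 + p (INR n) * ln lam)
    <= / (1 + p (INR n) * ln lam).
Proof.
  intros Hn He.
  pose proof (sum_lam_power_ge n Hn) as Hge.
  pose proof (sum_lam_power_le n Hn ltac:(lra)) as Hle.
  set (S := sum_from_1 _ n) in *.
  set (D := Rpower (INR n) _) in *.
  set (e := p (INR n) * ln lam) in *.
  assert (HD : 0 < D) by apply exp_pos.
  split.
  - apply Rmult_le_reg_r with D; [exact HD|].
    unfold Rdiv; rewrite Rmult_assoc, Rinv_l by lra. lra.
  - apply Rmult_le_reg_l with ((1 + e) * D); [apply Rmult_lt_0_compat; lra|].
    replace ((1 + e) * D * (S / D)) with ((1 + e) * S) by (field; lra).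
    replace ((1 + e) * D * / (1 + e)) with D by (field; lra).
    exact Hle.
Qed.

End Sandwich.

Theorem mainTheorem8 (lam : R) (p : R -> R)
  (Hlam : 0 < lam < 1)
  (Hc1 : C1_on_from_1 p)
  (Hpos : forall t, 1 <= t -> 0 < p t)
  (Hdec : forall s t, 1 <= s -> s <= t -> p t <= p s)
  (Hlim0 : forall eps, 0 < eps -> exists M, forall t, M <= t -> Rabs (p t) < eps)
  (Hinc : forall s t, 1 <= s -> s <= t -> p s * ln s <= p t * ln t)
  (Hliminf : forall A, exists M, forall t, M <= t -> A < p t * ln t) :
  Un_cv (fun N : nat =>
           sum_from_1 (fun j => Rpower lam (p (INR j) * ln (INR j))) N
           / Rpower (INR N) (1 + p (INR N) * ln lam)) 1.
Proof.
  apply (Un_cv_one_of_sandwich _ (fun n => p (INR n) * ln lam) 1).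
  - apply Un_cv_mult_const_0, Un_cv_INR_of_lim0, Hlim0.
  - intros n Hn He. apply ratio_sandwich; assumption.
Qed.
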